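(* Consider the system of ordinary differential equations \[ \dot u=r_{1}u(1-u)-a_{12}uv-a_{13}uw,\qquad \dot v=r_{2}v(1-v)+a_{21}uv,\qquad \dot w=-\mu w+a_{31}uw, \] with all parameters $r_1,r_2,\mu,a_{12},a_{13},a_{21},a_{31}$ positive. If $a_{31}\le\mu$, then every solution with positive initial data $u(0),v(0),w(0)>0$ satisfies $\lim_{t\to\infty}w(t)=0$. *)

From Stdlib Require Import Reals.
From Coquelicot Require Import Coquelicot.
Open Scope R_scope.

Definition is_solution (r1 r2 mu a12 a13 a21 a31 : R) (u v w : R -> R) : Prop :=
  (forall t, 0 < t ->
     is_derive u t (r1 * u t * (1 - u t) - a12 * u t * v t - a13 * u t * w t) /\
     is_derive v t (r2 * v t * (1 - v t) + a21 * u t * v t) /\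
     is_derive w t (- mu * w t + a31 * u t * w t)) /\
  filterlim u (at_right 0) (locally (u 0)) /\
  filterlim v (at_right 0) (locally (v 0)) /\
  filterlim w (at_right 0) (locally (w 0)).

From Stdlib Require Import Reals Lra.
From Coquelicot Require Import Coquelicot.
Open Scope R_scope.

(** Each equation has the Kolmogorov form [x' = x g], so an integrating factor
    shows that positive initial data stay positive, and then [(ln x)' = g].
    The engine is a trapping argument: if [(ln f)' <= -eta < 0] whenever
    [f >= K], then [f] eventually stays below [K] (and symmetrically from
    below).  Since [u > 0], [(ln v)' >= r2 (1 - v)], so eventually [v > 1/2];
    from then on [(ln u)' <= r1 (1 - u) - a12/2], so eventually [u < K] for
    some [K < 1]; finally [(ln w)' = a31 u - mu <= -a31 (1 - K)] because
    [a31 <= mu], so [w] drops below every [eps > 0]. *)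

Ltac solve_continuous :=
  repeat match goal with
  | |- continuous (fun s => @?f s - @?g s) _ => apply (continuous_minus f g)
  | |- continuous (fun s => @?f s + @?g s) _ => apply (continuous_plus f g)
  | |- continuous (fun s => @?f s * @?g s) _ => apply (continuous_mult f g)
  | |- continuous (fun _ => ?c) _ => apply continuous_const
  end; try assumption.

Lemma continuity_pt_of_is_derive (f : R -> R) (x l : R) :
  is_derive f x l -> continuity_pt f x.
Proof.
  intros Hd. apply continuity_pt_filterlim, (ex_derive_continuous f x).
  now exists l.
Qed.

Lemma is_derive_RInt_right_half_line (h : R -> R) (T0 a t : R) :
  (forall s, T0 < s -> continuous h s) -> T0 < a -> T0 < t ->
  is_derive (fun s => RInt h a s) t (h t).
Proof.
  intros Hc Ha Ht.
  apply is_derive_RInt with (a := a); [|now apply Hc].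
  assert (Hr : 0 < t - T0) by lra.
  exists (mkposreal _ Hr); intros b Hb.
  change (Rabs (b - t) < t - T0) in Hb. apply Rabs_def2 in Hb.
  apply RInt_correct, ex_RInt_continuous; intros z [Hz _].
  apply Hc. pose proof (Rmin_glb_lt a b T0 Ha ltac:(lra)). lra.
Qed.

Lemma constant_of_is_derive_0 (f : R -> R) (T0 a t : R) :
  (forall s, T0 < s -> is_derive f s 0) -> T0 < a -> T0 < t -> f t = f a.
Proof.
  intros Hd Ha Ht.
  pose proof (Rmin_glb_lt a t T0 Ha Ht) as Hmin.
  destruct (MVT_gen f a t (fun _ => 0)) as [c [_ Hc]].
  - intros x [Hx _]. apply Hd. lra.
  - intros x [Hx _]. apply (continuity_pt_of_is_derive f x 0), Hd. lra.
  - lra.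
Qed.

Lemma eq_exp_RInt_of_is_derive_mul (f h : R -> R) :
  (forall t, 0 < t -> is_derive f t (f t * h t)) ->
  (forall t, 0 < t -> continuous h t) ->
  forall t, 0 < t -> f t = f 1 * exp (RInt h 1 t).
Proof.
  intros Hd Hc.
  set (phi := fun s => f s * exp (- RInt h 1 s)).
  assert (Hphi : forall t, 0 < t -> is_derive phi t 0).
  { intros t Ht.
    assert (Hexp : is_derive (fun s => exp (- RInt h 1 s)) t
                     (- h t * exp (- RInt h 1 t))).
    { apply (is_derive_comp exp (fun s => - RInt h 1 s)).
      - apply is_derive_exp.
      - apply (is_derive_opp (fun s => RInt h 1 s)).
        apply (is_derive_RInt_right_half_line h 0); first [assumption | lra]. }
    replace 0 with (f t * h t * exp (- RInt h 1 t)
                    + f t * (- h t * exp (- RInt h 1 t))) by ring.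
    exact (is_derive_mult f _ t _ _ (Hd t Ht) Hexp Rmult_comm). }
  intros t Ht.
  pose proof (constant_of_is_derive_0 phi 0 1 t Hphi ltac:(lra) Ht) as Hconst.
  unfold phi in Hconst. rewrite RInt_point in Hconst. change zero with 0 in Hconst.
  rewrite Ropp_0, exp_0, Rmult_1_r in Hconst.
  rewrite <- Hconst, exp_Ropp. field. apply Rgt_not_eq, exp_pos.
Qed.

Lemma pos_of_is_derive_mul (f h : R -> R) :
  (forall t, 0 < t -> is_derive f t (f t * h t)) ->
  (forall t, 0 < t -> continuous h t) ->
  filterlim f (at_right 0) (locally (f 0)) -> 0 < f 0 ->
  forall t, 0 <= t -> 0 < f t.
Proof.
  intros Hd Hc Hlim Hf0.
  pose proof (eq_exp_RInt_of_is_derive_mul f h Hd Hc) as Hform.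
  assert (Hf1 : 0 < f 1).
  { destruct (Hlim _ (open_gt 0 (f 0) Hf0)) as [d Hd'].
    pose proof (cond_pos d) as Hd0.
    assert (Hd2 : 0 < d / 2) by lra.
    assert (Hball : ball 0 d (d / 2)).
    { change (Rabs (d / 2 - 0) < d). rewrite Rminus_0_r, Rabs_pos_eq; lra. }
    pose proof (Hd' _ Hball Hd2) as Hpos.
    rewrite (Hform _ Hd2) in Hpos.
    pose proof (exp_pos (RInt h 1 (d / 2))). nra. }
  intros t Ht. destruct (Req_dec t 0) as [->|Hne]; [exact Hf0|].
  rewrite (Hform t ltac:(lra)). apply Rmult_lt_0_compat; [exact Hf1|apply exp_pos].
Qed.

Lemma is_derive_neg_left_gt (f : R -> R) (m d s : R) :
  s < m -> is_derive f m d -> d < 0 -> exists x, s < x < m /\ f m < f x.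
Proof.
  intros Hsm Hd Hneg. apply is_derive_Reals in Hd.
  destruct (Hd (- d / 2)) as [del Hdel]; [lra|].
  pose proof (cond_pos del) as Hdel0.
  set (k := Rmin (del / 2) ((m - s) / 2)).
  assert (Hk1 : k <= del / 2) by apply Rmin_l.
  assert (Hk2 : k <= (m - s) / 2) by apply Rmin_r.
  assert (Hk0 : 0 < k) by (apply Rmin_glb_lt; lra).
  assert (Hq : Rabs ((f (m + - k) - f m) / - k - d) < - d / 2).
  { apply Hdel; [lra|]. rewrite Rabs_left; lra. }
  apply Rabs_def2 in Hq.
  set (q := (f (m + - k) - f m) / - k) in Hq.
  assert (Hslope : f (m + - k) - f m = q * - k) by (unfold q; field; lra).
  exists (m + - k). split; [lra|nra].
Qed.

Lemma le_left_of_derive_neg_above (f df : R -> R) (T0 K : R) :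
  (forall t, T0 < t -> is_derive f t (df t)) ->
  (forall t, T0 < t -> K <= f t -> df t < 0) ->
  forall s t, T0 < s -> s <= t -> K <= f t -> f t <= f s.
Proof.
  intros Hd Hneg s t Hs Hst HK.
  destruct (Rle_lt_dec (f t) (f s)) as [|Hlt]; [assumption|exfalso].
  destruct (continuity_ab_maj f s t Hst) as [m [Hmax Hm]].
  { intros c Hc. apply (continuity_pt_of_is_derive f c (df c)), Hd. lra. }
  assert (Hfm : f t <= f m) by (apply Hmax; lra).
  assert (Hsm : s < m) by (destruct (Req_dec m s) as [->|]; lra).
  destruct (is_derive_neg_left_gt f m (df m) s Hsm) as [x [Hx Hfx]].
  - apply Hd; lra.
  - apply Hneg; lra.
  - assert (f x <= f m) by (apply Hmax; lra). lra.
Qed.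

Lemma eventually_lt_of_derive_le_neg (f df : R -> R) (K eta : R) :
  0 < eta ->
  Rbar_locally p_infty (fun t => is_derive f t (df t) /\ (K <= f t -> df t <= - eta)) ->
  Rbar_locally p_infty (fun t => f t < K).
Proof.
  intros Heta [T0 HT0].
  assert (Hd : forall t, T0 < t -> is_derive f t (df t)) by (intros t Ht; apply HT0, Ht).
  set (T1 := T0 + 1).
  set (A := Rabs (f T1 - K) / eta).
  assert (HA : A * eta = Rabs (f T1 - K)) by (unfold A; field; lra).
  assert (HA0 : 0 <= A) by (apply Rdiv_le_0_compat; [apply Rabs_pos|lra]).
  pose proof (RRle_abs (f T1 - K)).
  (* If [f t >= K], then [f >= K] on [[T1, t]] by [le_left_of_derive_neg_above],
     so [f] falls at rate [eta] there and is below [K] by time [T1 + A]. *)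
  exists (T1 + A). intros t Ht.
  destruct (Rlt_le_dec (f t) K) as [|HK]; [assumption|exfalso].
  destruct (MVT_gen f T1 t df) as [c [Hc Hmvt]];
    rewrite ?Rmin_left, ?Rmax_right in * by lra.
  - intros x Hx. apply Hd. unfold T1 in Hx; lra.
  - intros x Hx. apply (continuity_pt_of_is_derive f x (df x)), Hd. unfold T1 in Hx; lra.
  - assert (Hfc : f t <= f c).
    { apply (le_left_of_derive_neg_above f df T0 K Hd); try (unfold T1 in Hc; lra).
      intros x Hx HKx. pose proof (proj2 (HT0 x Hx) HKx). lra. }
    assert (Hdc : df c <= - eta) by (apply HT0; [unfold T1 in Hc; lra|lra]).
    nra.
Qed.

Lemma is_derive_ln_of_rate (f g : R -> R) (t : R) :
  0 < f t -> is_derive f t (f t * g t) -> is_derive (fun s => ln (f s)) t (g t).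
Proof.
  intros Hf Hd.
  replace (g t) with (f t * g t * / f t) by (field; lra).
  exact (is_derive_comp ln f t _ _ (is_derive_ln _ Hf) Hd).
Qed.

Lemma eventually_lt_of_rate_le_neg (f g : R -> R) (K eta : R) :
  0 < K -> 0 < eta ->
  Rbar_locally p_infty
    (fun t => 0 < f t /\ is_derive f t (f t * g t) /\ (K <= f t -> g t <= - eta)) ->
  Rbar_locally p_infty (fun t => f t < K).
Proof.
  intros HK Heta Hev.
  assert (Hln : Rbar_locally p_infty (fun t => ln (f t) < ln K)).
  { apply (eventually_lt_of_derive_le_neg (fun t => ln (f t)) g _ eta Heta).
    refine (filter_imp _ _ _ Hev). intros t [Hf [Hd Hg]]. split.
    - exact (is_derive_ln_of_rate f g t Hf Hd).
    - intros Hle. apply Hg.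
      destruct (Rle_lt_dec K (f t)) as [|Hlt]; [assumption|].
      pose proof (ln_increasing _ _ Hf Hlt). lra. }
  refine (filter_imp _ _ _ (filter_and _ _ Hev Hln)). intros t [[Hf _] Hlt].
  exact (ln_lt_inv _ _ Hf HK Hlt).
Qed.

Lemma eventually_gt_of_rate_ge_pos (f g : R -> R) (K eta : R) :
  0 < K -> 0 < eta ->
  Rbar_locally p_infty
    (fun t => 0 < f t /\ is_derive f t (f t * g t) /\ (f t <= K -> eta <= g t)) ->
  Rbar_locally p_infty (fun t => K < f t).
Proof.
  intros HK Heta Hev.
  assert (Hln : Rbar_locally p_infty (fun t => - ln (f t) < - ln K)).
  { apply (eventually_lt_of_derive_le_neg (fun t => - ln (f t)) (fun t => - g t) _ eta Heta).
    refine (filter_imp _ _ _ Hev). intros t [Hf [Hd Hg]]. split.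
    - exact (is_derive_opp _ _ _ (is_derive_ln_of_rate f g t Hf Hd)).
    - intros Hle. cut (eta <= g t); [lra|]. apply Hg.
      destruct (Rle_lt_dec (f t) K) as [|Hlt]; [assumption|].
      pose proof (ln_increasing _ _ HK Hlt). lra. }
  refine (filter_imp _ _ _ (filter_and _ _ Hev Hln)). intros t [[Hf _] Hlt].
  apply ln_lt_inv; [exact HK|exact Hf|lra].
Qed.

Section Solution.

Variables r1 r2 mu a12 a13 a21 a31 : R.
Variables u v w : R -> R.
Hypothesis sol : is_solution r1 r2 mu a12 a13 a21 a31 u v w.

Let rate_u s := r1 * (1 - u s) - a12 * v s - a13 * w s.
Let rate_v s := r2 * (1 - v s) + a21 * u s.
Let rate_w s := - mu + a31 * u s.

Lemma solution_is_derive_rates t : 0 < t ->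
  is_derive u t (u t * rate_u t) /\ is_derive v t (v t * rate_v t) /\
  is_derive w t (w t * rate_w t).
Proof.
  intros Ht. destruct sol as [Hd _]. destruct (Hd t Ht) as [Du [Dv Dw]].
  unfold rate_u, rate_v, rate_w.
  split; [|split].
  - replace (u t * _) with (r1 * u t * (1 - u t) - a12 * u t * v t - a13 * u t * w t)
      by ring. exact Du.
  - replace (v t * _) with (r2 * v t * (1 - v t) + a21 * u t * v t) by ring. exact Dv.
  - replace (w t * _) with (- mu * w t + a31 * u t * w t) by ring. exact Dw.
Qed.

Lemma rates_continuous t : 0 < t ->
  continuous rate_u t /\ continuous rate_v t /\ continuous rate_w t.
Proof.
  intros Ht. destruct (solution_is_derive_rates t Ht) as [Du [Dv Dw]].
  assert (Cu : continuous u t) by (apply (ex_derive_continuous u t); eexists; exact Du).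
  assert (Cv : continuous v t) by (apply (ex_derive_continuous v t); eexists; exact Dv).
  assert (Cw : continuous w t) by (apply (ex_derive_continuous w t); eexists; exact Dw).
  unfold rate_u, rate_v, rate_w. repeat split; solve_continuous.
Qed.

Hypotheses (Hu0 : 0 < u 0) (Hv0 : 0 < v 0) (Hw0 : 0 < w 0).

Lemma solution_pos t : 0 <= t -> 0 < u t /\ 0 < v t /\ 0 < w t.
Proof.
  destruct sol as [_ [Lu [Lv Lw]]].
  split; [|split].
  - apply (pos_of_is_derive_mul u rate_u); try assumption;
      intros s Hs; first [apply (solution_is_derive_rates s Hs) | apply (rates_continuous s Hs)].
  - apply (pos_of_is_derive_mul v rate_v); try assumption;
      intros s Hs; first [apply (solution_is_derive_rates s Hs) | apply (rates_continuous s Hs)].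
  - apply (pos_of_is_derive_mul w rate_w); try assumption;
      intros s Hs; first [apply (solution_is_derive_rates s Hs) | apply (rates_continuous s Hs)].
Qed.

Hypotheses (Hr2 : 0 < r2) (Ha21 : 0 < a21).

Lemma v_eventually_gt_half : Rbar_locally p_infty (fun t => 1 / 2 < v t).
Proof.
  apply (eventually_gt_of_rate_ge_pos v rate_v (1 / 2) (r2 / 2)); try lra.
  exists 0. intros t Ht.
  destruct (solution_pos t) as [Pu [Pv _]]; [lra|].
  destruct (solution_is_derive_rates t Ht) as [_ [Dv _]].
  refine (conj Pv (conj Dv _)). intros Hv. unfold rate_v. nra.
Qed.

Hypotheses (Hr1 : 0 < r1) (Ha12 : 0 < a12) (Ha13 : 0 < a13).

Lemma u_eventually_lt_one : exists K, K < 1 /\ Rbar_locally p_infty (fun t => u t < K).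
Proof.
  set (K := Rmax (1 / 2) (1 - a12 / (4 * r1))).
  assert (HK : 1 / 2 <= K) by apply Rmax_l.
  assert (HK' : 1 - a12 / (4 * r1) <= K) by apply Rmax_r.
  assert (Hr : r1 * (a12 / (4 * r1)) = a12 / 4) by (field; lra).
  exists K. split.
  { apply Rmax_lub_lt; [lra|]. assert (0 < a12 / (4 * r1)) by (apply Rdiv_lt_0_compat; lra).
    lra. }
  apply (eventually_lt_of_rate_le_neg u rate_u K (a12 / 4)); try lra.
  apply (filter_imp (fun t => 0 < t /\ 1 / 2 < v t)).
  - intros t [Ht Hv].
    destruct (solution_pos t) as [Pu [_ Pw]]; [lra|].
    destruct (solution_is_derive_rates t Ht) as [Du _].
    refine (conj Pu (conj Du _)). intros Hu. unfold rate_u. nra.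
  - apply filter_and; [now exists 0 | exact v_eventually_gt_half].
Qed.

Hypotheses (Ha31 : 0 < a31) (Hmu : a31 <= mu).

Lemma w_vanishes : is_lim w p_infty 0.
Proof.
  destruct u_eventually_lt_one as [K [HK Hu]].
  apply is_lim_spec. intros eps.
  pose proof (cond_pos eps) as Heps.
  assert (Hw : Rbar_locally p_infty (fun t => w t < eps)).
  { apply (eventually_lt_of_rate_le_neg w rate_w eps (a31 * (1 - K))); try nra.
    apply (filter_imp (fun t => 0 < t /\ u t < K)).
    - intros t [Ht Hut].
      destruct (solution_pos t) as [_ [_ Pw]]; [lra|].
      destruct (solution_is_derive_rates t Ht) as [_ [_ Dw]].
      refine (conj Pw (conj Dw _)). intros _. unfold rate_w. nra.
    - apply filter_and; [now exists 0 | exact Hu]. }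
  refine (filter_imp _ _ _ (filter_and _ _ Hw (ex_intro _ 0 (fun t Ht => Ht)))).
  intros t [Hwt Ht]. destruct (solution_pos t) as [_ [_ Pw]]; [lra|].
  rewrite Rminus_0_r, Rabs_pos_eq; lra.
Qed.

End Solution.

Theorem lemma3 (r1 r2 mu a12 a13 a21 a31 : R) (u v w : R -> R) :
  0 < r1 -> 0 < r2 -> 0 < mu -> 0 < a12 -> 0 < a13 -> 0 < a21 -> 0 < a31 ->
  a31 <= mu ->
  is_solution r1 r2 mu a12 a13 a21 a31 u v w ->
  0 < u 0 -> 0 < v 0 -> 0 < w 0 ->
  is_lim w p_infty 0.
Proof.
  intros Hr1 Hr2 _ Ha12 Ha13 Ha21 Ha31 Hmu Hsol Hu0 Hv0 Hw0.
  exact (w_vanishes r1 r2 mu a12 a13 a21 a31 u v w Hsol Hu0 Hv0 Hw0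
           Hr2 Ha21 Hr1 Ha12 Ha13 Ha31 Hmu).
Qed.
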